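(* Let $G = T\times H$, where $T$ is a finite $2$-group and $H$ is a finite group of odd order. Then \[ \mathsf{GEN}(G)=\begin{cases} *1, & \text{if } |G| \text{ is odd and } d(G)\ge 3,\\ *1, & \text{if } G\cong \mathbb{Z}_{4k} \text{ for some integer } k\ge 1,\\ *1, & \text{if } G\cong \mathbb{Z}_2^2\times H \text{ with } d(H)\le 2,\\ *2, & \text{if } G\cong \mathbb{Z}_2,\\ *2, & \text{if } |G| \text{ is odd and } d(G)\in\{1,2\},\\ *4, & \text{if } G\cong \mathbb{Z}_{4k+2} \text{ for some integer } k\ge 1,\\ *0, & \text{otherwise.} \end{cases} \]
   Context: For a finite group $G$, $\mathsf{GEN}(G)$ is the following impartial two-player game. A position is a set of elements selected so far; the starting position is $\emptyset$. From a position $P$ with $\langle P\rangle\neq G$, the player to move selects some $g\in G\setminus P$, producing the position $P\cup\{g\}$ (these are the options of $P$); a position $P$ with $\langle P\rangle = G$ has no options. The player who makes the selected set generate $G$ wins (equivalently, the player unable to move loses). The nim-number of a position is defined recursively by $\operatorname{nim}(P)=\operatorname{mex}\{\operatorname{nim}(Q): Q \text{ an option of } P\}$, where $\operatorname{mex}(A)$ is the least nonnegative integer not in $A$ (so positions with no options have nim-number $0$). We write $\mathsf{GEN}(G)=*n$ if $\operatorname{nim}(\emptyset)=n$. $d(G)$ denotes the minimum size of a generating set of $G$ (with $d(G)=0$ for trivial $G$). $\mathbb{Z}_n$ is the cyclic group of order $n$. *)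

From mathcomp Require Import all_boot all_fingroup all_algebra all_solvable.
Set Implicit Arguments. Unset Strict Implicit. Unset Printing Implicit Defensive.
Local Open Scope group_scope.

(* mex of a finite list of naturals: least n not in s (always <= size s). *)
Definition mex (s : seq nat) : nat :=
  find (fun n => n \notin s) (iota 0 (size s).+1).

Section Gen.
Variable gT : finGroupType.
Variable G : {group gT}.

(* Positions with <<P>> = G have no options (nim 0); otherwise the options
   are P :|: {g} for g in G \ P. Fuel #|G :\: P|.+1 always suffices. *)
Fixpoint nim_fuel (n : nat) (P : {set gT}) : nat :=
  match n with
  | 0 => 0
  | n'.+1 =>
      if <<P>> == G :> {set gT} then 0
      else mex [seq nim_fuel n' (g |: P) | g <- enum (G :\: P)]
  end.

Definition nim_pos (P : {set gT}) : nat := nim_fuel #|G|.+1 P.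

(* GEN(G) = * nimGEN G *)
Definition nimGEN : nat := nim_pos set0.

Definition dgen : nat :=
  find (fun n => [exists A : {set gT},
                   [&& A \subset G, #|A| == n & <<A>> == G :> {set gT}]])
       (iota 0 #|G|.+1).
End Gen.

From mathcomp Require Import all_boot all_fingroup all_algebra all_solvable.
From mathcomp Require Import zify.
Set Implicit Arguments. Unset Strict Implicit. Unset Printing Implicit Defensive.
Local Open Scope group_scope.

(* A position P of GEN(T x H) is summarised by its deficiency in T (the least
   number of elements of T that, added to the T-components of P, generate T),
   its deficiency in H, whether <<P>> has even order (i.e. some element of P
   has a nontrivial T-component), and the parity of |P|; one more bit depends
   on T alone: whether T has a nontrivial element t that is useless for
   generating T. A move lowers each deficiency by at most one, and lowering
   the T-deficiency makes <<P>> even; conversely every admissible change of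
   the summary is realised by some move. Hence the nim-value of P is a
   function of the summary, given by an explicit finite table checked by
   evaluation. The starting position has deficiencies d(T) and d(H), and the
   table is nonzero there only when T is trivial, of order 2, cyclic of order
   divisible by 4, or a Klein four-group: these are the cases of the theorem. *)

Lemma find_iota0_eq (P : pred nat) m N :
  P m -> (forall k, k < m -> ~~ P k) -> m < N -> find P (iota 0 N) = m.
Proof.
move=> Pm notP ltmN; have hasP : has P (iota 0 N).
  by apply/hasP; exists m => //; rewrite mem_iota.
have Pj := nth_find 0 hasP; move: (hasP); rewrite has_find size_iota => ltj.
rewrite nth_iota // add0n in Pj.
case: (ltngtP (find P (iota 0 N)) m) => // [ltjm|ltmj].
  by move: (notP _ ltjm); rewrite Pj.
by have := before_find 0 ltmj; rewrite nth_iota ?add0n ?Pm.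
Qed.

Lemma mex_eq (s : seq nat) v :
  v \notin s -> (forall k, k < v -> k \in s) -> mex s = v.
Proof.
move=> vs ks; apply: find_iota0_eq => [|k /ks -> //|]; first exact: vs.
rewrite ltnS -[v](size_iota 0) uniq_leq_size ?iota_uniq // => k.
by rewrite mem_iota add0n => /ks.
Qed.

Lemma add_ltnE m n : m <= n <= m.+1 -> n = m + (m < n).
Proof. by case: ltnP => /=; lia. Qed.

Section RelativeRank.
Variable gT : finGroupType.
Implicit Types (K : {group gT}) (Y A : {set gT}).

Definition relrank_at K Y : pred nat := fun n =>
  [exists A : {set gT}, [&& A \subset K, #|A| == n & K \subset <<Y :|: A>>]].

Lemma relrank_at_exists K Y : exists n, relrank_at K Y n.
Proof.
exists #|K|; apply/existsP; exists (K : {set gT}).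
by rewrite subxx eqxx sub_gen ?subsetUr.
Qed.

Definition relrank K Y := ex_minn (relrank_at_exists K Y).

Lemma relrankP K Y :
  exists A, [/\ A \subset K, #|A| = relrank K Y & K \subset <<Y :|: A>>].
Proof.
rewrite /relrank; case: ex_minnP => n /existsP[A /and3P[sAK /eqP <- sK]] _.
by exists A.
Qed.

Lemma relrank_min K Y A : A \subset K -> K \subset <<Y :|: A>> -> relrank K Y <= #|A|.
Proof.
move=> sAK sK; rewrite /relrank; case: ex_minnP => n _; apply.
by apply/existsP; exists A; rewrite sAK eqxx.
Qed.

Lemma eq_relrank K Y1 Y2 : <<Y1>> = <<Y2>> -> relrank K Y1 = relrank K Y2.
Proof.
have le Z1 Z2 : <<Z1>> = <<Z2>> -> relrank K Z2 <= relrank K Z1.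
  move=> eZ; have [A [sAK <- sK]] := relrankP K Z1.
  by apply: relrank_min sAK _; rewrite -[<<_ :|: A>>]/(Z2 <*> A) -joing_idl -eZ joing_idl.
by move=> eY; apply/eqP; rewrite eqn_leq !le.
Qed.

Lemma relrankS K Y1 Y2 : Y1 \subset Y2 -> relrank K Y2 <= relrank K Y1.
Proof.
move=> sY; have [A [sAK <- sK]] := relrankP K Y1.
by apply: relrank_min sAK (subset_trans sK (genS (setSU _ sY))).
Qed.

Lemma relrankU1 K Y y : y \in K -> relrank K Y <= (relrank K (y |: Y)).+1.
Proof.
move=> Ky; have [A [sAK <- sK]] := relrankP K (y |: Y).
apply: leq_trans (relrank_min (A := y |: A) _ _) _.
- by rewrite subUset sub1set Ky.
- by rewrite setUCA setUA.
- by rewrite cardsU1 -add1n leq_add2r leq_b1.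
Qed.

Lemma relrank_dec K Y : 0 < relrank K Y ->
  exists2 y, y \in K & relrank K (y |: Y) = (relrank K Y).-1.
Proof.
move=> rpos; have [A [sAK cA sK]] := relrankP K Y.
have /card_gt0P[y Ay] : 0 < #|A| by rewrite cA.
have Ky := subsetP sAK y Ay; exists y => //.
apply/eqP; rewrite eqn_leq -[_.-1 <= _]ltnS prednK // relrankU1 // andbT.
have -> : (relrank K Y).-1 = #|A :\ y| by rewrite -cA (cardsD1 y A) Ay.
apply: relrank_min; first exact: subset_trans (subsetDl _ _) sAK.
by rewrite -setUA setUCA setD1K.
Qed.

Lemma genU1_mem Y y : y \in <<Y>> -> <<y |: Y>> = <<Y>>.
Proof.
move=> yY; apply/eqP.
by rewrite eqEsubset gen_subG subUset sub1set yY subset_gen genS ?subsetUr.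
Qed.

Lemma genU1_triv Y y : Y \subset [1] -> <<y |: Y>> = <<[set y]>>.
Proof.
move=> Y1; apply/eqP; rewrite eqEsubset [_ \subset <<y |: Y>>]genS ?subsetUl // andbT.
by rewrite gen_subG subUset subset_gen (subset_trans Y1) ?sub1G.
Qed.

Lemma relrankU1_gen K Y y : y \in <<Y>> -> relrank K (y |: Y) = relrank K Y.
Proof. by move=> yY; apply: eq_relrank; apply: genU1_mem. Qed.

Lemma relrankU1_notin K Y y : relrank K (y |: Y) != relrank K Y -> y \notin <<Y>>.
Proof. by apply: contra => /relrankU1_gen ->. Qed.

Lemma relrank_eq0 K Y : (relrank K Y == 0) = (K \subset <<Y>>).
Proof.
apply/eqP/idP => [r0 | sK]; last first.
  by apply/eqP; rewrite -leqn0 -(cards0 gT) relrank_min ?sub0set ?setU0.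
have [A [_ cA sK]] := relrankP K Y.
by move: cA; rewrite r0 => /eqP; rewrite cards_eq0 => /eqP A0; rewrite A0 setU0 in sK.
Qed.

Lemma dgen_relrank K : dgen K = relrank K set0.
Proof.
rewrite /dgen; apply: find_iota0_eq.
- have [A [sAK cA sK]] := relrankP K set0; apply/existsP; exists A.
  by rewrite sAK cA eqxx eqEsubset gen_subG sAK -(set0U A).
- move=> k lt; apply/existsP => [[A /and3P[sAK /eqP cA /eqP gA]]].
  have := relrank_min (Y := set0) sAK; rewrite set0U gA subxx cA => /(_ isT).
  by rewrite leqNgt lt.
- by rewrite ltnS (leq_trans (relrank_min (subxx K) _)) // set0U genGid.
Qed.

Lemma dgen_eq0 K : (dgen K == 0) = (K :==: 1).
Proof. by rewrite dgen_relrank relrank_eq0 gen0 subG1. Qed.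

Lemma dgen_le1 K : (dgen K <= 1) = cyclic K.
Proof.
rewrite dgen_relrank; apply/idP/cyclicP => [|[x eK]]; last first.
  by rewrite -(cards1 x); apply: relrank_min; rewrite ?set0U eK ?sub1set ?cycle_id.
have [A [sAK <- sK]] := relrankP K set0; rewrite set0U in sK.
rewrite leq_eqVlt ltnS leqn0 cards_eq0 => /orP[/cards1P[x Ax] | /eqP A0].
  rewrite Ax in sK sAK; exists x; apply/eqP.
  by rewrite eqEsubset sK cycle_subG -sub1set sAK.
by exists 1; rewrite cycle1; apply/trivgP; rewrite -gen0 -A0.
Qed.

Lemma relrank_le_dgen K Y : relrank K Y <= dgen K.
Proof. by rewrite dgen_relrank relrankS ?sub0set. Qed.

Definition nontriv_nongen K :=
  [exists t in K, (t != 1) && (relrank K [set t] == dgen K)].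

End RelativeRank.

Lemma even_of_2elt (gT : finGroupType) (K : {group gT}) u :
  2.-elt u -> u != 1 -> u \in K -> ~~ odd #|K|.
Proof.
move=> u2 u1 Ku; apply: contra u1 => oK.
have : odd #[u] by apply: dvdn_odd (order_dvdG Ku) oK.
rewrite odd_2'nat => u2'; apply/eqP; rewrite -(constt_p_elt u2).
exact/constt1P.
Qed.

Lemma imset_cycle_sub_gen (gT : finGroupType) (f : gT -> gT) (P : {set gT}) :
  {in P, forall x, f x \in <[x]>} -> f @: P \subset <<P>>.
Proof.
move=> fP; apply/subsetP=> _ /imsetP[x Px ->].
by apply: subsetP (fP x Px); rewrite cycle_subG mem_gen.
Qed.

Section NimTable.
Local Open Scope nat_scope.

Definition nim_even_tab (a b : nat) (p : bool) : nat :=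
  if p then (match a, b with 0, 0 => 0 | _, _ => if (a <= 2) && (b <= 2) then 2 else 1 end)
  else (match a, b with 0, 1 | 1, 0 | 1, 1 => 1 | _, _ => 0 end).

Definition nim_odd_tab (a b : nat) (p : bool) : nat :=
  match a with
  | 0 => if p then (match b with 1 => 1 | _ => 0 end)
         else (match b with 0 => 0 | 1 | 2 => 2 | _ => 1 end)
  | 1 => if p then (match b with 0 => 1 | 1 => 3 | 2 => 2 | _ => 1 end)
         else (match b with 0 => 2 | 1 => 4 | _ => 0 end)
  | 2 => if p then (match b with 0 | 1 => 0 | 2 | 3 => 2 | _ => 1 end)
         else (match b with 0 | 1 | 2 => 1 | _ => 0 end)
  | _ => if p then 1 else 0
  end.

(* [nim_tab phi a b e p]: [a], [b] are the deficiencies in T and H, [e] says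
   that <<P>> has even order, [p] that |P| is odd, and [phi] that T has a
   nontrivial nongenerator. *)
Definition nim_tab (phi : bool) a b (e p : bool) :=
  if e || phi then nim_even_tab a b p else nim_odd_tab a b p.

Lemma nim_tab00 phi e p : nim_tab phi 0 0 e p = 0.
Proof. by case: phi; case: e; case: p. Qed.

Lemma nim_tab_move phi a b e p (da db e' : bool) :
  (~~ e && phi) ==> (0 < a + da) -> (0 < a + da) || (0 < b + db) ->
  da ==> e' -> e ==> e' -> (~~ da && ~~ e && e') ==> phi ->
  nim_tab phi a b e' (~~ p) != nim_tab phi (a + da) (b + db) e p.
Proof.
case: phi; case: e; case: p; case: da; case: db; case: e';
case: a => [|[|[|[|a]]]]; case: b => [|[|[|[|[|b]]]]]; by [].
Qed.

(* The six alternatives are the moves provided by [move_decT], [move_decTH],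
   [move_decH], [move_keep], [move_nongen] and [move_nongen_decH] below. *)
Lemma nim_tab_mex phi a b e p k :
  (~~ e && phi) ==> (0 < a) -> (0 < a) || (0 < b) -> k < nim_tab phi a b e p ->
  [|| [&& 0 < a & nim_tab phi a.-1 b true (~~ p) == k],
      [&& 0 < a, 0 < b & nim_tab phi a.-1 b.-1 true (~~ p) == k],
      [&& 0 < b & nim_tab phi a b.-1 e (~~ p) == k],
      [&& p == e & nim_tab phi a b e (~~ p) == k],
      [&& ~~ e, phi & nim_tab phi a b true (~~ p) == k] |
      [&& ~~ e, phi, 0 < b & nim_tab phi a b.-1 true (~~ p) == k]].
Proof.
case: phi; case: e; case: p; case: a => [|[|[|[|a]]]]; case: b => [|[|[|[|[|b]]]]];
case: k => [|[|[|[|k]]]]; by [].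
Qed.

End NimTable.

Section DirectProductGame.
Variables (gT : finGroupType) (G T H : {group gT}).
Hypotheses (defG : T \x H = G) (T2 : 2.-group T) (oddH : odd #|H|).
Implicit Types (P Q : {set gT}) (g x : gT).

Fact cent_trivmH : trivm H @* H \subset 'C(idm T @* T).
Proof. by rewrite morphim_trivm sub1G. Qed.
Fact cent_trivmT : idm H @* H \subset 'C(trivm T @* T).
Proof. by rewrite morphim_trivm cents1. Qed.

Definition projT := dprodm defG cent_trivmH.
Definition projH := dprodm defG cent_trivmT.

Lemma projTE t h : t \in T -> h \in H -> projT (t * h) = t.
Proof. by move=> Tt Hh; rewrite /projT dprodmE //= mulg1. Qed.
Lemma projHE t h : t \in T -> h \in H -> projH (t * h) = h.
Proof. by move=> Tt Hh; rewrite /projH dprodmE //= mul1g. Qed.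

Lemma projT_H h : h \in H -> projT h = 1.
Proof. by move=> Hh; rewrite -{1}[h]mul1g projTE ?group1. Qed.

Lemma projTH x : x \in G -> [/\ projT x \in T, projH x \in H & x = projT x * projH x].
Proof. by case/(mem_dprod defG) => t [h [Tt Hh -> _]]; rewrite projTE ?projHE. Qed.

Let sTG : T \subset G := (mulG_sub (dprodW defG)).1.
Let sHG : H \subset G := (mulG_sub (dprodW defG)).2.

Lemma projT_im : projT @* G = T.
Proof. by rewrite im_dprodm morphim_idm // morphim_trivm mulg1. Qed.
Lemma projH_im : projH @* G = H.
Proof. by rewrite im_dprodm morphim_idm // morphim_trivm mul1g. Qed.

Lemma projT_cycle x : x \in G -> projT x \in <[x]>.
Proof.
case/(mem_dprod defG) => t [h [Tt Hh -> _]]; rewrite projTE //.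
have [_ _ cTH _] := dprodP defG.
have cth : commute t h by apply: commute_sym; apply: (centsP cTH).
have H2' : (2^').-group H by rewrite /pgroup -odd_2'nat.
suff e2 : (t * h).`_2 = t by rewrite -{1}e2; apply: cycle_constt.
rewrite consttM // constt_p_elt ?(mem_p_elt T2) //.
by rewrite (constt1P (mem_p_elt H2' Hh)) mulg1.
Qed.

Lemma projH_cycle x : x \in G -> projH x \in <[x]>.
Proof.
move=> Gx; have [_ _ ex] := projTH Gx.
have -> : projH x = (projT x)^-1 * x by rewrite [X in _ * X]ex mulKg.
by rewrite groupM ?groupV ?cycle_id ?projT_cycle.
Qed.

Lemma projT_gen_sub P : P \subset G -> projT @: P \subset <<P>>.
Proof. by move=> sPG; apply: imset_cycle_sub_gen => x /(subsetP sPG)/projT_cycle. Qed.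

Lemma projH_gen_sub P : P \subset G -> projH @: P \subset <<P>>.
Proof. by move=> sPG; apply: imset_cycle_sub_gen => x /(subsetP sPG)/projH_cycle. Qed.

Definition defT P := relrank T (projT @: P).
Definition defH P := relrank H (projH @: P).
Definition even_gen P := ~~ odd #|<<P>>|.

Lemma even_genE P : P \subset G -> even_gen P = [exists x in P, projT x != 1].
Proof.
move=> sPG; apply/idP/idP => [|/exists_inP[x Px ntx]]; last first.
  have [Tx _ _] := projTH (subsetP sPG x Px).
  apply: even_of_2elt (mem_p_elt T2 Tx) ntx _.
  by apply: subsetP (projT_gen_sub sPG) _ (imset_f _ Px).
apply: contraLR; rewrite negb_exists_in negbK => /forall_inP PT1.
apply: oddSg oddH; rewrite gen_subG; apply/subsetP=> x Px.
have [_ Hx ->] := projTH (subsetP sPG x Px).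
by rewrite (eqP (negbNE (PT1 x Px))) mul1g.
Qed.

Lemma gen_eq_G P : P \subset G -> (<<P>> == G :> {set gT}) = (defT P == 0) && (defH P == 0).
Proof.
move=> sPG; rewrite /defT /defH !relrank_eq0; apply/eqP/andP => [genP | [sT sH]].
  by rewrite -!morphimEsub // -!morphim_gen // genP projT_im projH_im.
apply/eqP; rewrite eqEsubset gen_subG sPG -(dprodW defG) mul_subG //.
  by rewrite (subset_trans sT) // gen_subG projT_gen_sub.
by rewrite (subset_trans sH) // gen_subG projH_gen_sub.
Qed.

Lemma even_genS P Q : P \subset Q -> even_gen P -> even_gen Q.
Proof. by move=> sPQ; apply: contra => oQ; apply: oddSg oQ; apply: genS. Qed.

Lemma projT_odd P : P \subset G -> ~~ even_gen P -> projT @: P \subset [1].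
Proof.
move=> sPG; rewrite even_genE // negb_exists_in => /forall_inP PT1.
by apply/subsetP=> _ /imsetP[x Px ->]; rewrite inE; apply: negbNE (PT1 x Px).
Qed.

Lemma defT_odd P : P \subset G -> ~~ even_gen P -> defT P = dgen T.
Proof.
move=> sPG /(projT_odd sPG) PT1; rewrite dgen_relrank; apply: eq_relrank.
by rewrite gen0; apply/trivgP; rewrite gen_subG.
Qed.

Lemma even_gen_defT P : P \subset G -> defT P < dgen T -> even_gen P.
Proof. by move=> sPG; apply: contraTT => /(defT_odd sPG) ->; rewrite ltnn. Qed.

Lemma nongen_of_even P : P \subset G -> even_gen P -> defT P = dgen T -> nontriv_nongen T.
Proof.
move=> sPG; rewrite even_genE // => /exists_inP[x Px ntx] defTP.
have [Tx _ _] := projTH (subsetP sPG x Px).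
apply/exists_inP; exists (projT x) => //; rewrite ntx eqn_leq relrank_le_dgen /=.
by rewrite -defTP relrankS // sub1set imset_f.
Qed.

Lemma nongen_defT P : P \subset G -> (~~ even_gen P && nontriv_nongen T) ==> (0 < defT P).
Proof.
move=> sPG; apply/implyP => /andP[/(defT_odd sPG) -> /exists_inP[t Tt /andP[ntt _]]].
by rewrite lt0n dgen_eq0; apply/trivgPn; exists t.
Qed.

Lemma defT_U1 P g : g \in G -> defT (g |: P) <= defT P <= (defT (g |: P)).+1.
Proof.
by case/projTH=> Tg _ _; rewrite /defT imsetU1 relrankS ?subsetUr ?relrankU1.
Qed.

Lemma defH_U1 P g : g \in G -> defH (g |: P) <= defH P <= (defH (g |: P)).+1.
Proof.
by case/projTH=> _ Hg _; rewrite /defH imsetU1 relrankS ?subsetUr ?relrankU1.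
Qed.

Definition move_to P a b e := exists2 g, g \in G :\: P &
  [/\ defT (g |: P) = a, defH (g |: P) = b & even_gen (g |: P) = e].

Lemma even_gen_U1 P t h : P \subset G -> t \in T -> h \in H -> t != 1 -> even_gen (t * h |: P).
Proof.
move=> sPG Tt Hh ntt; have Gth := groupM (subsetP sTG t Tt) (subsetP sHG h Hh).
rewrite even_genE; last by rewrite subUset sub1set Gth.
by apply/exists_inP; exists (t * h); rewrite ?setU11 ?projTE.
Qed.

Lemma even_gen_U1H P h : P \subset G -> h \in H -> even_gen (h |: P) = even_gen P.
Proof.
move=> sPG Hh; rewrite !even_genE //; last by rewrite subUset sub1set (subsetP sHG).
apply/exists_inP/exists_inP => [[x /setU1P[-> | Px] ntx] | [x Px ntx]].
- by rewrite projT_H ?eqxx in ntx.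
- by exists x.
- by exists x; rewrite ?setU1r.
Qed.

Lemma move_to_mul P t h : t \in T -> h \in H ->
    (t \notin projT @: P) || (h \notin projH @: P) ->
  move_to P (relrank T (t |: projT @: P)) (relrank H (h |: projH @: P)) (even_gen (t * h |: P)).
Proof.
move=> Tt Hh fresh; exists (t * h); last by rewrite /defT /defH !imsetU1 projTE ?projHE.
rewrite inE groupM ?(subsetP sTG t Tt) ?(subsetP sHG h Hh) // andbT.
apply: contraL fresh => thP; have := imset_f projT thP; have := imset_f projH thP.
by rewrite projTE ?projHE // => -> ->.
Qed.

Lemma move_decT_mul P h : P \subset G -> 0 < defT P -> h \in H ->
  move_to P (defT P).-1 (relrank H (h |: projH @: P)) true.
Proof.
move=> sPG Tpos Hh.
have [t Tt dT] : exists2 t, t \in T & relrank T (t |: projT @: P) = (defT P).-1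
  := relrank_dec Tpos.
have /relrankU1_notin tY : relrank T (t |: projT @: P) != defT P by rewrite dT; apply/eqP; lia.
have ntt : t != 1 by apply: contraNneq tY => ->; apply: group1.
have tP : t \notin projT @: P by apply: contra tY; apply: mem_gen.
by have := @move_to_mul P t h Tt Hh; rewrite dT even_gen_U1 // tP; apply.
Qed.

Lemma move_decT P : P \subset G -> 0 < defT P -> move_to P (defT P).-1 (defH P) true.
Proof.
move=> sPG Tpos; have := move_decT_mul sPG Tpos (group1 H).
by rewrite relrankU1_gen ?group1.
Qed.

Lemma move_decTH P : P \subset G -> 0 < defT P -> 0 < defH P ->
  move_to P (defT P).-1 (defH P).-1 true.
Proof.
move=> sPG Tpos /relrank_dec[h Hh dH].
by have := move_decT_mul sPG Tpos Hh; rewrite dH.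
Qed.

Lemma move_decH P : P \subset G -> 0 < defH P -> move_to P (defT P) (defH P).-1 (even_gen P).
Proof.
move=> sPG Hpos; have [h Hh dH] : exists2 h, h \in H & relrank H (h |: projH @: P) = (defH P).-1
  := relrank_dec Hpos.
have /relrankU1_notin hY : relrank H (h |: projH @: P) != defH P by rewrite dH; apply/eqP; lia.
have := @move_to_mul P 1 h (group1 T) Hh; rewrite dH relrankU1_gen ?group1 // mul1g.
rewrite even_gen_U1H //.
have hP : h \notin projH @: P by apply: contra hY; apply: mem_gen.
by rewrite hP orbT; apply.
Qed.

Lemma move_keep P : P \subset G -> odd #|P| = even_gen P ->
  move_to P (defT P) (defH P) (even_gen P).
Proof.
move=> sPG oddP; have /subsetPn[g Pg gP] : ~~ (<<P>> \subset P).
  apply/negP => sPP; have eP : <<P>> = P by apply/eqP; rewrite eqEsubset sPP subset_gen.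
  by move: oddP; rewrite /even_gen eP; case: (odd _).
have Gg : g \in G by apply: subsetP Pg; rewrite gen_subG.
have proj_gen (f : {morphism G >-> gT}) : f g \in <<f @: P>>.
  by rewrite -morphimEsub // -morphim_gen // mem_morphim.
exists g; first by rewrite inE gP.
rewrite /defT /defH /even_gen !imsetU1 genU1_mem //.
by rewrite !relrankU1_gen //; apply: proj_gen.
Qed.

Lemma move_nongen_mul P h : P \subset G -> ~~ even_gen P -> nontriv_nongen T -> h \in H ->
  move_to P (defT P) (relrank H (h |: projH @: P)) true.
Proof.
move=> sPG evP /exists_inP[t Tt /andP[ntt /eqP dTt]] Hh.
have PT1 := projT_odd sPG evP.
have tP : t \notin projT @: P by apply: contra ntt => /(subsetP PT1); rewrite inE.
have := @move_to_mul P t h Tt Hh; rewrite tP even_gen_U1 // => /(_ isT).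
by rewrite defT_odd // -dTt (eq_relrank _ (genU1_triv _ PT1)).
Qed.

Lemma move_nongen P : P \subset G -> ~~ even_gen P -> nontriv_nongen T ->
  move_to P (defT P) (defH P) true.
Proof.
move=> sPG evP ng; have := move_nongen_mul sPG evP ng (group1 H).
by rewrite relrankU1_gen ?group1.
Qed.

Lemma move_nongen_decH P : P \subset G -> ~~ even_gen P -> nontriv_nongen T -> 0 < defH P ->
  move_to P (defT P) (defH P).-1 true.
Proof.
move=> sPG evP ng /relrank_dec[h Hh dH].
by have := move_nongen_mul sPG evP ng Hh; rewrite dH.
Qed.

Local Notation nim_tab_at P p :=
  (nim_tab (nontriv_nongen T) (defT P) (defH P) (even_gen P) p).

Lemma nim_tab_U1_neq P g : P \subset G -> g \in G -> (0 < defT P) || (0 < defH P) ->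
  nim_tab_at (g |: P) (~~ odd #|P|) != nim_tab_at P (odd #|P|).
Proof.
move=> sPG Gg nzP; set Q := g |: P; have sQG : Q \subset G by rewrite subUset sub1set Gg.
have [/add_ltnE eTP /add_ltnE eHP] := (defT_U1 P Gg, defH_U1 P Gg).
rewrite [in X in _ != X]eTP [in X in _ != X]eHP.
apply: nim_tab_move; rewrite -?eTP -?eHP ?nongen_defT //.
- by apply/implyP => ltTQP; apply: even_gen_defT (leq_trans ltTQP (relrank_le_dgen _ _)).
- by apply/implyP; apply: even_genS; apply: subsetUr.
apply/implyP => /andP[/andP[eqTQP /(defT_odd sPG) defTP] evQ].
apply: (nongen_of_even sQG evQ); rewrite -defTP; apply/eqP.
by rewrite eqn_leq [defT P <= _]leqNgt eqTQP andbT; case/andP: (defT_U1 P Gg).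
Qed.

Lemma nim_tab_mex_move P k : P \subset G -> (0 < defT P) || (0 < defH P) ->
    k < nim_tab_at P (odd #|P|) ->
  exists a b e, move_to P a b e /\ nim_tab (nontriv_nongen T) a b e (~~ odd #|P|) = k.
Proof.
move=> sPG nzP /(nim_tab_mex (nongen_defT sPG) nzP).
set phi := nontriv_nongen T; set p := ~~ odd #|P|.
have mv a b e : move_to P a b e ->
  exists a' b' e', move_to P a' b' e' /\ nim_tab phi a' b' e' p = nim_tab phi a b e p.
  by exists a, b, e.
case/orP => [/andP[Tpos /eqP <-]|]; first exact/mv/move_decT.
case/orP => [/and3P[Tpos Hpos /eqP <-]|]; first exact/mv/move_decTH.
case/orP => [/andP[Hpos /eqP <-]|]; first exact/mv/move_decH.
case/orP => [/andP[/eqP oddP /eqP <-]|]; first exact/mv/move_keep.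
case/orP => [/and3P[evP ng /eqP <-]|]; first exact/mv/move_nongen.
by case/and4P => [evP ng Hpos /eqP <-]; apply/mv/move_nongen_decH.
Qed.

Lemma nim_fuelE n P : P \subset G -> #|G :\: P| < n -> nim_fuel G n P = nim_tab_at P (odd #|P|).
Proof.
elim: n P => [//|n IHn] P sPG ltPn /=.
case: ifPn => [|ngenP]; first by rewrite gen_eq_G // => /andP[/eqP-> /eqP->]; rewrite nim_tab00.
have nzP : (0 < defT P) || (0 < defH P) by move: ngenP; rewrite gen_eq_G // !lt0n negb_and.
have IHg g : g \in G :\: P -> nim_fuel G n (g |: P) = nim_tab_at (g |: P) (~~ odd #|P|).
  move=> gGP; have [Gg gP] := setDP gGP.
  rewrite IHn ?cardsU1 ?gP ?subUset ?sub1set ?Gg //.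
  have -> : G :\: (g |: P) = (G :\: P) :\ g by apply/setP=> x; rewrite !inE negb_or andbA.
  by move: ltPn; rewrite (cardsD1 g (G :\: P)) gGP.
apply: mex_eq => [|k /(nim_tab_mex_move sPG nzP)[a [b [e [[g gGP [<- <- <-]] <-]]]]].
  apply/mapP => -[g]; rewrite mem_enum => gGP; rewrite IHg //; apply/eqP.
  by rewrite eq_sym; apply: nim_tab_U1_neq; case/setDP: gGP.
by rewrite -IHg //; apply: map_f; rewrite mem_enum.
Qed.

Lemma nimGEN_tab : nimGEN G = nim_tab (nontriv_nongen T) (dgen T) (dgen H) false false.
Proof.
rewrite /nimGEN /nim_pos nim_fuelE ?sub0set ?setD0 // /defT /defH /even_gen.
by rewrite !imset0 -!dgen_relrank gen0 cards1 cards0.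
Qed.

End DirectProductGame.

Section Nongenerators.
Variable gT : finGroupType.
Implicit Types K : {group gT}.

Lemma dgen_cyclic K : cyclic K -> K :!=: 1 -> dgen K = 1%N.
Proof. by rewrite -dgen_le1 -dgen_eq0; case: dgen => [|[]]. Qed.

Lemma nongen_prime K : prime #|K| -> ~~ nontriv_nongen K.
Proof.
move=> pK; apply/exists_inP => -[t Kt /andP[ntt /eqP]].
have oT : #[t] = #|K| by apply/(prime_nt_dvdP pK); rewrite ?order_eq1 ?order_dvdG.
have /eqP eK : <[t]> == K :> {set gT} by rewrite eqEcard cycle_subG Kt -orderE oT /=.
have ntK : K :!=: 1 by apply/trivgPn; exists t.
rewrite dgen_cyclic ?prime_cyclic //.
have /eqP -> // : relrank K [set t] == 0.
by rewrite relrank_eq0 -[<<[set t]>>]/<[t]> eK.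
Qed.

Lemma nongen_cyclic4 K : cyclic K -> 4 %| #|K| -> nontriv_nongen K.
Proof.
move=> cK d4; have /cyclicP[t eK] := cK.
have oT : #[t] = #|K| by rewrite eK.
have d2 : 2 %| #|K| := dvdn_trans (isT : 2 %| 4) d4.
have ntK : K :!=: 1 by rewrite trivg_card1; apply/eqP => K1; rewrite K1 in d4.
apply/exists_inP; exists (t ^+ 2); first by rewrite groupX // eK cycle_id.
rewrite dgen_cyclic // eqn_leq; apply/andP; split.
  apply/eqP => t21; have : #[t] %| 2 by rewrite order_dvdn t21.
  by rewrite oT => /(dvdn_trans d4).
have -> /= : relrank K [set t ^+ 2] <= 1 by rewrite -(dgen_cyclic cK ntK) relrank_le_dgen.
rewrite lt0n relrank_eq0.
apply/negP => /subset_leq_card; rewrite -[#|<<_>>|]/#[t ^+ 2] orderXdiv oT //.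
by rewrite leqNgt ltn_Pdiv // cardG_gt0.
Qed.

Section Klein.
Variable K : {group gT}.
Hypotheses (cardK : #|K| = 4) (expK : forall t, t \in K -> t ^+ 2 = 1).

Lemma klein_order u : u \in K -> u != 1 -> #[u] = 2.
Proof.
move=> Ku ntu; have : #[u] %| 2 by rewrite order_dvdn expK.
by have := order_gt1 u; rewrite ntu; case: #[u] => [|[|[|]]].
Qed.

Lemma klein_outside u : u \in K -> u != 1 -> exists2 y, y \in K & y \notin <[u]>.
Proof.
move=> Ku ntu; apply/subsetPn; apply/negP => /subset_leq_card.
by rewrite cardK -orderE klein_order.
Qed.

Lemma klein_gen u y : u \in K -> u != 1 -> y \in K -> y \notin <[u]> ->
  K \subset <<[set u; y]>>.
Proof.
move=> Ku ntu Ky yu; set L := <<[set u; y]>>.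
have sLK : L \subset K by rewrite gen_subG subUset !sub1set Ku Ky.
have ltuL : #|<[u]> | < #|L|.
  apply/proper_card/properP; split; first by rewrite cycle_subG mem_gen ?setU11.
  by exists y => //; apply: mem_gen; rewrite !inE eqxx orbT.
have : #|L| %| 4 by rewrite -cardK cardSg.
move: ltuL; rewrite -orderE klein_order // => ltuL dvdL.
have /eqP <- // : L == K :> {set gT}.
rewrite eqEcard sLK cardK /=; move: ltuL dvdL.
by case: #|L| => [|[|[|[|[]]]]].
Qed.

Lemma klein_dgen : dgen K = 2.
Proof.
have ntK : K :!=: 1 by rewrite trivg_card1 cardK.
have [u Ku ntu] := trivgPn _ ntK; have [y Ky yu] := klein_outside Ku ntu.
apply/eqP; rewrite eqn_leq; apply/andP; split.
  rewrite dgen_relrank (leq_trans (relrank_min (A := [set u; y]) _ _)) ?set0U //.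
  - by rewrite subUset !sub1set Ku Ky.
  - exact: klein_gen.
  - by rewrite cards2; case: (u != y).
rewrite ltnNge dgen_le1; apply/cyclicP => -[x eK].
have Kx : x \in K by rewrite eK cycle_id.
have : #[x] %| 2 by rewrite order_dvdn expK.
by rewrite [#[x]](_ : _ = 4) // -cardK eK.
Qed.

Lemma klein_nongen : ~~ nontriv_nongen K.
Proof.
apply/exists_inP => -[t Kt /andP[ntt /eqP]]; rewrite klein_dgen.
have [y Ky yt] := klein_outside Kt ntt.
suff : relrank K [set t] <= 1 by move=> le1 rt; rewrite rt in le1.
by rewrite -(cards1 y); apply: relrank_min; rewrite ?sub1set //; apply: klein_gen.
Qed.

End Klein.

Lemma relrank_Phi K u : u \in 'Phi(K) -> relrank K [set u] = dgen K.
Proof.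
move=> Pu; apply/eqP; rewrite eqn_leq relrank_le_dgen /=.
have [A [sAK <- sK]] := relrankP K [set u].
have genA : <<A>> = K.
  apply: Phi_nongen; apply/eqP; rewrite eqEsubset gen_subG subUset Phi_sub sAK /=.
  by apply: subset_trans sK (genS (setSU _ _)); rewrite sub1set.
by rewrite dgen_relrank relrank_min // set0U genA.
Qed.

Lemma abelem_of_nongen (p : nat) K : p.-group K -> ~~ nontriv_nongen K -> p.-abelem K.
Proof.
move=> pK ngK; rewrite -(trivg_Phi pK); apply/trivgPn => -[u Pu ntu].
apply: (negP ngK); apply/exists_inP; exists u; first exact: subsetP (Phi_sub K) u Pu.
by rewrite ntu (relrank_Phi Pu) eqxx.
Qed.

Lemma abelem2_isog K : 2.-abelem K -> dgen K = 2 -> K \isog setX (Zp 2) (Zp 2).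
Proof.
move=> abK dK2; have o2 x : x \in K -> x != 1 -> #[x] = 2 by apply: abelem_order_p abK.
have [A [sAK cA sK]] := relrankP K set0; rewrite set0U in sK.
move: cA; rewrite -dgen_relrank dK2 => /eqP/cards2P[x [y [_ eA]]].
rewrite eA in sAK sK; move: sAK; rewrite subUset !sub1set => /andP[Kx Ky].
have ncyc z : z \in K -> ~~ (K \subset <[z]>).
  move=> Kz; apply/negP => sKz.
  have : cyclic K by apply/cyclicP; exists z; apply/eqP; rewrite eqEsubset sKz cycle_subG.
  by rewrite -dgen_le1 dK2.
have xy : x \notin <[y]>.
  apply: contra (ncyc y Ky) => xy; apply: subset_trans sK _.
  by rewrite gen_subG subUset !sub1set xy cycle_id.
have yx : y \notin <[x]>.
  apply: contra (ncyc x Kx) => yx; apply: subset_trans sK _.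
  by rewrite gen_subG subUset !sub1set yx cycle_id.
have ntx : x != 1 by apply: contraNneq xy => ->; apply: group1.
have nty : y != 1 by apply: contraNneq yx => ->; apply: group1.
have Kxy : <[x]> \x <[y]> = K.
  have cxy : <[y]> \subset 'C(<[x]>).
    by apply: (sub_abelian_cent2 (abelem_abelian abK)); rewrite cycle_subG.
  rewrite dprodE //; last by apply: prime_TIg; rewrite -?orderE ?o2 // cycle_subG.
  rewrite -cent_joinEr //; apply/eqP; rewrite eqEsubset gen_subG subUset !cycle_subG Kx Ky.
  apply: subset_trans sK (genS _); rewrite subUset !sub1set.
  by rewrite !inE !cycle_id orbT.
have Zp_iso z : z \in K -> z != 1 -> <[z]> \isog Zp 2.
  by move=> Kz ntz; rewrite isog_sym -(o2 z Kz ntz); apply: Zp_isog.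
apply: isog_dprod Kxy (setX_dprod (Zp_group 2) (Zp_group 2)) _ _.
  exact: isog_trans (Zp_iso x Kx ntx) (isog_setX1 _ _).
exact: isog_trans (Zp_iso y Ky nty) (isog_set1X _ _).
Qed.

End Nongenerators.

Lemma cyclic_isog_Zp (gT : finGroupType) (K : {group gT}) : cyclic K -> K \isog Zp #|K|.
Proof.
case/cyclicP=> x eK; have -> : K = <[x]>%G by apply: val_inj.
by rewrite isog_sym; apply: Zp_isog.
Qed.

Lemma isog_Zp_cyclic (gT : finGroupType) (K : {group gT}) n :
  1 < n -> K \isog Zp n -> cyclic K /\ #|K| = n.
Proof.
move=> n_gt1 iso; split; last by rewrite (card_isog iso) card_Zp // ltnW.
by rewrite (isog_cyclic iso) /= /Zp n_gt1 Zp_cycle cycle_cyclic.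
Qed.

Lemma snd_expg (gT1 gT2 : finGroupType) (x : gT1 * gT2) n : (x ^+ n).2 = x.2 ^+ n.
Proof. by elim: n => // n IHn; rewrite !expgS -IHn. Qed.

Section Classification.
Variables (gT : finGroupType) (G T H : {group gT}).
Hypotheses (defG : T \x H = G) (T2 : 2.-group T) (oddH : odd #|H|).

Let cardG : (#|T| * #|H|)%N = #|G| := dprod_card defG.
Let sTG : T \subset G := (mulG_sub (dprodW defG)).1.
Let sHG : H \subset G := (mulG_sub (dprodW defG)).2.

Lemma oddG_trivT : odd #|G| = (T :==: 1).
Proof.
rewrite trivg_card1 -cardG oddM oddH andbT (card_pgroup T2).
by case: (logn 2 #|T|) => [|m]; rewrite ?expnS ?oddM //=; apply/esym/eqP; lia.
Qed.

Lemma cyclic_dprodTH : cyclic T -> cyclic H -> cyclic G.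
Proof.
move=> cT cH; rewrite (cyclic_dprod defG cT cH) (card_pgroup T2).
by rewrite coprimeXl // coprime2n.
Qed.

Lemma nimGEN_odd : odd #|G| -> nimGEN G = nim_odd_tab 0 (dgen G) false.
Proof.
rewrite oddG_trivT => /eqP T1; have defGH : G = H.
  by apply: val_inj; move: defG; rewrite T1 dprod1g.
rewrite (nimGEN_tab defG T2 oddH) /nim_tab defGH.
have /eqP -> : dgen T == 0 by rewrite dgen_eq0 T1.
suff /negbTE -> : ~~ nontriv_nongen T by [].
by apply/exists_inP => -[t]; rewrite T1 inE => /eqP ->; rewrite eqxx.
Qed.

Lemma nimGEN_order2 : #|T| = 2 -> nimGEN G = nim_odd_tab 1 (dgen H) false.
Proof.
move=> T_2; have pT : prime #|T| by rewrite T_2.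
rewrite (nimGEN_tab defG T2 oddH) /nim_tab (negbTE (nongen_prime pT)).
by rewrite dgen_cyclic ?prime_cyclic // trivg_card1 T_2.
Qed.

Lemma nimGEN_cyclic4 : cyclic T -> 4 %| #|T| -> nimGEN G = nim_even_tab 1 (dgen H) false.
Proof.
move=> cT d4; rewrite (nimGEN_tab defG T2 oddH) /nim_tab nongen_cyclic4 ?orbT //.
by rewrite dgen_cyclic // trivg_card1; apply: contraTneq d4 => ->.
Qed.

Lemma nimGEN_rank2 : dgen T = 2 -> ~~ nontriv_nongen T ->
  nimGEN G = nim_odd_tab 2 (dgen H) false.
Proof. by move=> dT2 ngT; rewrite (nimGEN_tab defG T2 oddH) /nim_tab (negbTE ngT) dT2. Qed.

Lemma klein_of_isog : G \isog setX (setX (Zp 2) (Zp 2)) H ->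
  #|T| = 4 /\ (forall t, t \in T -> t ^+ 2 = 1).
Proof.
move=> iso.
have T_4 : #|T| = 4.
  have := card_isog iso; rewrite !cardsX !card_Zp // -cardG.
  by move/eqP; rewrite eqn_pmul2r ?cardG_gt0 // => /eqP.
split=> // t Tt; have Gt := subsetP sTG t Tt.
case/isogP: iso => f injf fG.
have fG_t : f t \in setX (setX (Zp 2) (Zp 2)) H by rewrite -fG mem_morphim.
have ft4 : f t ^+ 4 = 1 by rewrite -morphX // -T_4 expg_cardG // morph1.
apply: (injmP injf); rewrite ?groupX // morphX // morph1.
move: (f t) fG_t ft4 => [[a b] h]; rewrite !inE /= => Hh /(congr1 snd).
rewrite snd_expg /= => h4; have h1 : h = 1.
  apply/eqP; rewrite -order_eq1; have : #[h] %| 4 by rewrite order_dvdn h4.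
  have : odd #[h] by apply: dvdn_odd (order_dvdG Hh) oddH.
  by case: #[h] => [|[|[|[|[|]]]]].
have Z2sq (c : 'Z_2) : c * c = 1.
  by have := expg_cardG (in_setT c); rewrite cardsT card_ord expgS expg1.
rewrite h1 expgS expg1.
by have -> : (a, b, 1) * (a, b, 1) = (a * a, b * b, 1 * 1) by []; rewrite !Z2sq mulg1.
Qed.

Lemma isog_klein : dgen T = 2 -> ~~ nontriv_nongen T ->
  G \isog setX (setX (Zp 2) (Zp 2)) H.
Proof.
move=> dT2 ngT; have iT := abelem2_isog (abelem_of_nongen T2 ngT) dT2.
apply: isog_dprod defG (setX_dprod (setX_group (Zp_group 2) (Zp_group 2)) H) _ _.
  exact: isog_trans iT (isog_setX1 _ _).
exact: isog_set1X.
Qed.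

Lemma nimGEN_Zp4k k : 0 < k -> G \isog Zp (4 * k) -> nimGEN G = 1%N.
Proof.
move=> k_gt0 iso; have n_gt1 : (1 < 4 * k)%N by lia.
have [cG oG] := isog_Zp_cyclic n_gt1 iso.
have d4 : 4 %| #|T|.
  rewrite -(Gauss_dvdl _ (_ : coprime 4 #|H|)); first by rewrite cardG oG dvdn_mulr.
  by rewrite (_ : 4 = 2 ^ 2)%N // coprimeXl // coprime2n.
rewrite nimGEN_cyclic4 ?(cyclicS sTG) //.
by have := cyclicS sHG cG; rewrite -dgen_le1; case: (dgen H) => [|[]].
Qed.

Lemma nimGEN_klein_isog : G \isog setX (setX (Zp 2) (Zp 2)) H -> dgen H <= 2 -> nimGEN G = 1%N.
Proof.
case/klein_of_isog=> T_4 expT.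
rewrite nimGEN_rank2 ?(klein_dgen T_4 expT) ?(klein_nongen T_4 expT) //.
by case: (dgen H) => [|[|[]]].
Qed.

Lemma nimGEN_Z2 : G \isog Zp 2 -> nimGEN G = 2.
Proof.
case/(isog_Zp_cyclic (isT : 1 < 2)) => _ oG.
have dH : #|H| %| 2 by rewrite -oG -cardG dvdn_mull.
have H_1 : #|H| = 1%N by move: dH oddH; case: #|H| => [|[|[|]]].
have T_2 : #|T| = 2 by rewrite -oG -cardG H_1 muln1.
rewrite nimGEN_order2 //.
by have /eqP -> : dgen H == 0 by rewrite dgen_eq0 trivg_card1 H_1.
Qed.

Lemma nimGEN_Zp4k2 k : 0 < k -> G \isog Zp (4 * k + 2) -> nimGEN G = 4.
Proof.
move=> k_gt0 iso; have n_gt1 : (1 < 4 * k + 2)%N by lia.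
have [cG oG] := isog_Zp_cyclic n_gt1 iso.
have [m oT] : exists m, #|T| = (2 ^ m)%N by exists (logn 2 #|T|); apply: card_pgroup.
have T_2 : #|T| = 2.
  case: m oT => [|[|m]] oT //.
    have oH : #|H| = (4 * k + 2)%N by rewrite -oG -cardG oT mul1n.
    by move: oddH; rewrite oH oddD oddM.
  have : 4 %| 4 * k + 2.
    by rewrite -oG -cardG oT !expnS !mulnA; do 2!apply: dvdn_mulr.
  by rewrite dvdn_addr ?dvdn_mulr.
rewrite nimGEN_order2 // dgen_cyclic ?(cyclicS sHG) // trivg_card1.
by apply/eqP => H_1; move: oG; rewrite -cardG T_2 H_1; lia.
Qed.

Lemma nimGEN_order2_neq0 : #|T| = 2 -> nimGEN G != 0 ->
  G \isog Zp 2 \/ exists k, 0 < k /\ G \isog Zp (4 * k + 2).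
Proof.
move=> T_2; have cT : cyclic T by rewrite prime_cyclic ?T_2.
rewrite nimGEN_order2 //; case dH: (dgen H) => [|[|d]] // _.
  left; have /eqP H1 : H :==: 1 by rewrite -dgen_eq0 dH.
  have -> : G = T by apply: val_inj; move: defG; rewrite H1 dprodg1.
  by move: (cyclic_isog_Zp cT); rewrite T_2.
have cH : cyclic H by rewrite -dgen_le1 dH.
have ntH : H :!=: 1 by rewrite -dgen_eq0 dH.
right; exists (#|H| %/ 2); split.
  by rewrite divn_gt0 // ltnNge; move: ntH oddH; rewrite trivg_card1; case: #|H| => [|[|[]]].
have -> : (4 * (#|H| %/ 2) + 2)%N = #|G|.
  by rewrite -cardG T_2 {2}(divn_eq #|H| 2) modn2 oddH; lia.
exact: cyclic_isog_Zp (cyclic_dprodTH cT cH).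
Qed.

Lemma nimGEN_cyclic4_neq0 : cyclic T -> 4 %| #|T| -> nimGEN G != 0 ->
  exists k, 0 < k /\ G \isog Zp (4 * k).
Proof.
move=> cT d4; rewrite nimGEN_cyclic4 //.
case: (leqP (dgen H) 1) => [dH1 _ | ]; last by case: (dgen H) => [|[|]].
have cH : cyclic H by rewrite -dgen_le1.
have d4G : 4 %| #|G| := dvdn_trans d4 (cardSg sTG).
exists (#|G| %/ 4); split; first by rewrite divn_gt0 // dvdn_leq.
by rewrite mulnC divnK //; apply: cyclic_isog_Zp (cyclic_dprodTH cT cH).
Qed.

Lemma nimGEN_eq0 :
  ~ ((odd #|G| /\ 3 <= dgen G) \/ (exists k, 0 < k /\ G \isog Zp (4 * k)) \/
     (G \isog setX (setX (Zp 2) (Zp 2)) H /\ dgen H <= 2) \/ G \isog Zp 2 \/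
     (odd #|G| /\ (dgen G = 1%N \/ dgen G = 2)) \/
     (exists k, 0 < k /\ G \isog Zp (4 * k + 2))) ->
  nimGEN G = 0.
Proof.
move=> nC; apply/eqP/negPn/negP => nz; apply: nC.
case dT: (dgen T) => [|[|[|d]]].
- have oG : odd #|G| by rewrite oddG_trivT // -dgen_eq0 dT.
  move: nz; rewrite nimGEN_odd //; case: (dgen G) => [|[|[|d]]] // _.
  + by do 4!right; left; split; [|left].
  + by do 4!right; left; split; [|right].
  + by left.
- have cT : cyclic T by rewrite -dgen_le1 dT.
  have ntT : T :!=: 1 by rewrite -dgen_eq0 dT.
  case: (logn 2 #|T|) (card_pgroup T2) => [|[|m]] oT.
  + by move: ntT; rewrite trivg_card1 oT.
  + by case: (nimGEN_order2_neq0 oT nz) => [iso | C6]; [do 3!right; left | do 5!right].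
  + right; left; apply: nimGEN_cyclic4_neq0 nz => //.
    by rewrite oT !expnS mulnA dvdn_mulr.
- move: nz; case ngT: (nontriv_nongen T).
    by rewrite (nimGEN_tab defG) // ngT dT /nim_tab orbT; case: (dgen H).
  rewrite nimGEN_rank2 ?ngT //; case: (dgen H) => [|[|[|d]]] // _;
    by do 2!right; left; split=> //; apply: (isog_klein dT); rewrite ngT.
- by move: nz; rewrite (nimGEN_tab defG) // dT /nim_tab; case: (nontriv_nongen T); case: (dgen H).
Qed.

End Classification.

Unset Implicit Arguments. Set Strict Implicit. Set Printing Implicit Defensive.

Theorem theorem4p11 (gT : finGroupType) (G T H : {group gT})
  (hG : T \x H = G) (hT : 2.-group T) (hH : odd #|H|) :
  let v := nimGEN G in
  let C1 := odd #|G| /\ 3 <= dgen G in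
  let C2 := exists k : nat, 0 < k /\ G \isog Zp (4 * k) in
  let C3 := G \isog setX (setX (Zp 2) (Zp 2)) H /\ dgen H <= 2 in
  let C4 := G \isog Zp 2 in
  let C5 := odd #|G| /\ (dgen G = 1%N \/ dgen G = 2%N) in
  let C6 := exists k : nat, 0 < k /\ G \isog Zp (4 * k + 2) in
  (C1 -> v = 1%N) /\ (C2 -> v = 1%N) /\ (C3 -> v = 1%N) /\ (C4 -> v = 2%N) /\
  (C5 -> v = 2%N) /\ (C6 -> v = 4%N) /\
  (~ (C1 \/ C2 \/ C3 \/ C4 \/ C5 \/ C6) -> v = 0%N).
Proof.
cbv zeta; have nim_odd := nimGEN_odd hG hT hH.
split; first by case=> oG; rewrite nim_odd //; case: (dgen G) => [|[|[|]]].
split; first by case=> k [k_gt0]; apply: (nimGEN_Zp4k hG hT hH).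
split; first by case; apply: (nimGEN_klein_isog hG hT hH).
split; first exact: (nimGEN_Z2 hG hT hH).
split; first by case=> oG; rewrite nim_odd // => -[] ->.
split; first by case=> k [k_gt0]; apply: (nimGEN_Zp4k2 hG hT hH).
exact: (nimGEN_eq0 hG hT hH).
Qed.
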